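(* Let $\mathcal Y\subset\mathbb R^d$ be a finite set such that no element of $\mathcal Y$ is a strict convex combination of other elements of $\mathcal Y$. Let $\varepsilon>0$ and let $\mathbf Z$ be a standard multivariate normal random vector on $\mathbb R^d$. For $s_1,s_2\in V_\Delta$ with $s_1\neq s_2$, define $f_k(y;Z)=s_k(y)+\varepsilon Z^\top y$ for $k=1,2$. Then $$\mathbb P_{\mathbf Z}\Big(\operatorname*{argmax}_{y\in\mathcal Y}f_1(y;\mathbf Z)\cap\operatorname*{argmax}_{y\in\mathcal Y}f_2(y;\mathbf Z)=\emptyset\Big)>0.$$
   Context: $\mathbb R^{\mathcal Y}$ is the space of vectors $s$ indexed by $\mathcal Y$ with components $s(y)$, and $V_\Delta=\{s\in\mathbb R^{\mathcal Y}:\sum_{y\in\mathcal Y}s(y)=0\}$ (the direction of the affine hull of the probability simplex $\Delta^{\mathcal Y}$). *)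

From HB Require Import structures.
From mathcomp Require Import all_boot all_order all_algebra.
From mathcomp Require Import finmap.
From mathcomp Require Import all_classical all_reals all_analysis.
Set Implicit Arguments. Unset Strict Implicit. Unset Printing Implicit Defensive.
Import Order.TTheory GRing.Theory Num.Theory.
Local Open Scope classical_set_scope.
Local Open Scope ring_scope.

Definition dotv {R : realType} {d : nat} (z y : 'rV[R]_d) : R :=
  \sum_(i < d) z ord0 i * y ord0 i.

Definition strict_convex_comb_of_others {R : realType} {d : nat}
    (Y : {fset 'rV[R]_d}) (y : Y) : Prop :=
  exists lam : Y -> R,
    (forall x, 0 <= lam x) /\ lam y = 0 /\ \sum_(x : Y) lam x = 1 /\
    \sum_(x : Y) lam x *: (val x) = val y.

Definition in_VDelta {R : realType} {d : nat} (Y : {fset 'rV[R]_d})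
  (s : Y -> R) : Prop := \sum_(y : Y) s y = 0.

Definition argmax_set {R : realType} {I : Type} (f : I -> R) : set I :=
  [set y | forall x, f x <= f y].

Definition pert_obj {R : realType} {d : nat} (Y : {fset 'rV[R]_d})
  (s : Y -> R) (eps : R) (z : 'rV[R]_d) : Y -> R :=
  fun y => s y + eps * dotv z (val y).

Definition std_normal_vector {R : realType} {dT : measure_display}
    {T : measurableType dT} (P : probability T R) {d : nat}
    (Z : T -> 'rV[R]_d) : Prop :=
  (forall i : 'I_d, measurable_fun setT (fun w => Z w ord0 i)) /\
  (forall i : 'I_d, forall B : set R, measurable B ->
     P ((fun w => Z w ord0 i) @^-1` B) = normal_prob 0 1 B) /\
  (forall B : 'I_d -> set R, (forall i, measurable (B i)) ->
     P (\bigcap_(i in [set: 'I_d]) ((fun w => Z w ord0 i) @^-1` B i)) =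
     (\prod_(i < d) P ((fun w => Z w ord0 i) @^-1` B i))%E).

From HB Require Import structures.
From mathcomp Require Import all_boot all_order all_algebra.
From mathcomp Require Import finmap.
From mathcomp Require Import all_classical all_reals all_analysis.
From mathcomp Require Import ring lra measurable_realfun.
Set Implicit Arguments. Unset Strict Implicit. Unset Printing Implicit Defensive.
Import Order.TTheory GRing.Theory Num.Theory.
Import numFieldNormedType.Exports.
Local Open Scope classical_set_scope.
Local Open Scope ring_scope.

(* Let D := s1 - s2; it is not constant, so Y splits at a value c of D into a
   low part {D <= c} and a high part {D > c}, separated by a gap del > 0.  If
   the maximum of f2 over the low part beats its maximum over the high part by
   an amount in (0, del), then f2 is maximised only on the low part and
   f1 = f2 + D only on the high part.  This margin is a Lipschitz function of
   z.  Every point of Y is exposed (Gordan's alternative), so pushing z far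
   along an exposing direction makes the margin >= del at a low point and
   negative at a high point; by the intermediate value theorem it equals
   del / 2 somewhere, hence stays in (0, del) on a small box around that
   point, which the Gaussian vector hits with positive probability. *)

Section Dot.
Variables (R : realType) (d : nat).
Implicit Types u v w : 'rV[R]_d.

Lemma dotvDl u v w : dotv (u + v) w = dotv u w + dotv v w.
Proof. by rewrite /dotv -big_split; apply: eq_bigr => i _; rewrite mxE mulrDl. Qed.

Lemma dotvZl a u v : dotv (a *: u) v = a * dotv u v.
Proof. by rewrite /dotv mulr_sumr; apply: eq_bigr => i _; rewrite mxE mulrA. Qed.

Lemma dotvNl u v : dotv (- u) v = - dotv u v.
Proof. by rewrite -scaleN1r dotvZl mulN1r. Qed.

Lemma dotvBl u v w : dotv (u - v) w = dotv u w - dotv v w.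
Proof. by rewrite dotvDl dotvNl. Qed.

Lemma dotvC u v : dotv u v = dotv v u.
Proof. by apply: eq_bigr => i _; rewrite mulrC. Qed.

Lemma dotvZr a u v : dotv u (a *: v) = a * dotv u v.
Proof. by rewrite dotvC dotvZl dotvC. Qed.

Lemma dotvBr u v w : dotv u (v - w) = dotv u v - dotv u w.
Proof. by rewrite dotvC dotvBl !(dotvC u). Qed.

Lemma dotvv_gt0 v : v != 0 -> 0 < dotv v v.
Proof.
move=> v0; rewrite lt_def sumr_ge0 ?andbT => [|i _]; last by rewrite -expr2 sqr_ge0.
apply: contra v0 => /eqP/psumr_eq0P v2_0; apply/eqP/rowP => j; rewrite mxE.
by apply/eqP; rewrite -sqrf_eq0 expr2 v2_0 // => i _; rewrite -expr2 sqr_ge0.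
Qed.

End Dot.

Section FiniteBounds.
Variables (R : realType) (I : finType).

Lemma exists_lb_gt0 (P : pred I) (f : I -> R) :
  (forall i, P i -> 0 < f i) -> exists2 e : R, 0 < e & forall i, P i -> e <= f i.
Proof.
move=> f_gt0; have [i0 Pi0|P0] := pickP P; last by exists 1 => // i; rewrite P0.
by have [j Pj jmin] := arg_minP f Pi0; exists (f j); [exact: f_gt0|exact: jmin].
Qed.

Lemma exists_ub (f : I -> R) : exists2 K : R, 0 <= K & forall i, f i <= K.
Proof.
exists (\sum_i `|f i|) => [|i]; first exact: sumr_ge0.
by apply: le_trans (ler_norm _) _; rewrite (bigD1 i) //= lerDl sumr_ge0.
Qed.

Lemma convex_comb_lt0 (P : {set I}) (mu f : I -> R) :
  (forall i, 0 <= mu i) -> (forall i, i \notin P -> mu i = 0) -> \sum_i mu i = 1 ->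
  {in P, forall i, f i < 0} -> \sum_i mu i * f i < 0.
Proof.
move=> mu_ge0 mu_supp mu_sum1 f_lt0.
have [e e_gt0 le_e] : exists2 e : R, 0 < e & forall i, i \in P -> e <= - f i.
  by apply: exists_lb_gt0 => i Pi; rewrite oppr_gt0 f_lt0.
apply: (@le_lt_trans _ _ (\sum_i mu i * - e)).
  apply: ler_sum => i _; have [Pi|nPi] := boolP (i \in P); last by rewrite mu_supp ?mul0r.
  by rewrite ler_wpM2l // lerNr le_e.
by rewrite -mulr_suml mu_sum1 mul1r oppr_lt0.
Qed.

End FiniteBounds.

Section Gordan.
Variables (R : realType) (d : nat) (I : finType).
Implicit Types (P Q : {set I}) (v : I -> 'rV[R]_d) (u : 'rV[R]_d).

Definition zero_in_hull P v := exists lam : I -> R,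
  [/\ forall i, 0 <= lam i, forall i, i \notin P -> lam i = 0,
      \sum_i lam i = 1 & \sum_i lam i *: v i = 0].

Lemma zero_in_hullS P Q v : P \subset Q -> zero_in_hull P v -> zero_in_hull Q v.
Proof.
move=> sPQ [lam [lam_ge0 lam_supp lam1 lam_v]]; exists lam; split=> // i nQi.
by apply: lam_supp; exact: contra (fintype.subsetP sPQ i) nQi.
Qed.

Lemma zero_in_hull1 P v i0 : i0 \in P -> v i0 = 0 -> zero_in_hull P v.
Proof.
move=> Pi0 vi0; exists (fun i => (i == i0)%:R); split.
- by move=> i; rewrite ler0n.
- by move=> i; case: eqP => [->|//]; rewrite Pi0.
- by rewrite (bigD1 i0) //= eqxx big1 ?addr0 // => i /negbTE->.
- by rewrite (bigD1 i0) //= vi0 scaler0 big1 ?addr0 // => i /negbTE->; rewrite scale0r.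
Qed.

Lemma separating_perturb P v u x :
  {in P, forall i, dotv u (v i) < 0} ->
  exists2 t : R, 0 < t & {in P, forall i, dotv (u + t *: x) (v i) < 0}.
Proof.
move=> u_lt0.
have [e e_gt0 le_e] : exists2 e : R, 0 < e & forall i, i \in P -> e <= - dotv u (v i).
  by apply: exists_lb_gt0 => i Pi; rewrite oppr_gt0 u_lt0.
have [K K_ge0 le_K] := exists_ub (fun i => `|dotv x (v i)|).
exists (e / (K + 1)) => [|i Pi]; first by rewrite divr_gt0 // ltr_wpDl.
rewrite dotvDl dotvZl; have := le_e i Pi.
suff : e / (K + 1) * dotv x (v i) < e by lra.
rewrite mulrAC ltr_pdivrMr ?ltr_wpDl // mulrDr mulr1.
apply: (@le_lt_trans _ _ (e * K)); last by rewrite ltrDl.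
by rewrite ler_wpM2l ?(ltW e_gt0) // (le_trans (ler_norm _) (le_K i)).
Qed.

Lemma separating_extend P v u i0 :
  {in P, forall i, dotv u (v i) < 0} -> dotv u (v i0) <= 0 -> v i0 != 0 ->
  exists u', {in i0 |: P, forall i, dotv u' (v i) < 0}.
Proof.
move=> u_lt0 ui0_le0 vi0_neq0.
have [t t_gt0 ut_lt0] := separating_perturb (- v i0) u_lt0.
exists (u + t *: - v i0) => i; rewrite in_setU1 => /predU1P[->|]; last exact: ut_lt0.
rewrite dotvDl dotvZl dotvNl.
by have := mulr_gt0 t_gt0 (dotvv_gt0 vi0_neq0); lra.
Qed.

Lemma zero_in_hull_lift P v u i0 :
  0 <= dotv u (v i0) -> {in P, forall i, dotv u (v i) < 0} ->
  zero_in_hull P (fun i => dotv u (v i0) *: v i - dotv u (v i) *: v i0) ->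
  zero_in_hull (i0 |: P) v.
Proof.
set a := dotv u (v i0) => a_ge0 u_lt0 [mu [mu_ge0 mu_supp mu1 mu_w]].
set b := \sum_i mu i * dotv u (v i).
have b_lt0 : b < 0 by exact: convex_comb_lt0 mu_ge0 mu_supp mu1 u_lt0.
have ab_gt0 : 0 < a - b by lra.
have delta (V : nmodType) (F : I -> V) : \sum_i F i *+ (i == i0) = F i0.
  by under eq_bigr do rewrite mulrb; rewrite -big_mkcond big_pred1_eq.
(* mu_w says a * (sum_i mu i v i) - b * v i0 = 0 with -b > 0: normalise these
   weights by a - b. *)
exists (fun i => (a * mu i + (- b) *+ (i == i0)) / (a - b)); split.
- move=> i; rewrite divr_ge0 ?(ltW ab_gt0) //.
  by rewrite addr_ge0 ?mulr_ge0 ?mulrn_wge0 // oppr_ge0 ltW.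
- move=> i; rewrite in_setU1 negb_or => /andP[/negbTE-> /mu_supp->].
  by rewrite mulr0 add0r mul0r.
- by rewrite -mulr_suml big_split /= -mulr_sumr mu1 mulr1 delta divff ?gt_eqF.
have comb_v : a *: \sum_i mu i *: v i - b *: v i0 = 0.
  rewrite -[RHS]mu_w scaler_sumr scaler_suml -sumrB; apply: eq_bigr => i _.
  by rewrite scalerBr !scalerA [mu i * a]mulrC.
under eq_bigr do rewrite mulrC -scalerA.
rewrite -scaler_sumr -[RHS](scaler0 _ (a - b)^-1); congr (_ *: _).
apply: etrans comb_v; under eq_bigr do rewrite scalerDl -scalerMnl -scalerA.
by rewrite big_split /= delta scaleNr -scaler_sumr.
Qed.

Lemma gordan P v :
  zero_in_hull P v \/ exists u, {in P, forall i, dotv u (v i) < 0}.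
Proof.
have [n] := ubnP #|P|; elim: n P v => // n IH P v.
have [->|[i0 Pi0] P_lt] := set_0Vmem P => [_|].
  by right; exists 0 => i; rewrite inE.
set P' := P :\ i0.
have P'_lt : (#|P'| < n)%N by move: P_lt; rewrite (cardsD1 i0) Pi0 add1n ltnS.
rewrite -(finset.setD1K Pi0) -/P'.
have extend u : {in P', forall i, dotv u (v i) < 0} -> dotv u (v i0) <= 0 ->
    zero_in_hull (i0 |: P') v \/ exists u, {in i0 |: P', forall i, dotv u (v i) < 0}.
  move=> u_lt0 ui0_le0; have [vi0_0|vi0_neq0] := eqVneq (v i0) 0.
    by left; apply: zero_in_hull1 vi0_0; rewrite setU11.
  by right; apply: separating_extend u_lt0 ui0_le0 vi0_neq0.
have [hull'|[u u_lt0]] := IH P' v P'_lt.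
  by left; apply: zero_in_hullS (subsetU1 _ _) hull'.
have [ui0_le0|ui0_gt0] := lerP (dotv u (v i0)) 0; first exact: extend u_lt0 ui0_le0.
(* w i is orthogonal to u: it is the projection of v i along v i0 onto u^perp,
   rescaled by the positive factor u.v i0. *)
pose w i := dotv u (v i0) *: v i - dotv u (v i) *: v i0.
have [hull_w|[u' u'_lt0]] := IH P' w P'_lt.
  by left; apply: zero_in_hull_lift (ltW ui0_gt0) u_lt0 hull_w.
apply: (extend (dotv u (v i0) *: u' - dotv u' (v i0) *: u)) => [i P'i|].
  by have := u'_lt0 i P'i; rewrite /w dotvBl dotvBr !dotvZl !dotvZr; lra.
by rewrite dotvBl !dotvZl mulrC subrr.
Qed.

End Gordan.

Lemma exposed_of_not_convex_comb (R : realType) (d : nat) (Y : {fset 'rV[R]_d})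
    (y0 : Y) :
  ~ strict_convex_comb_of_others y0 ->
  exists u, forall x : Y, x != y0 -> dotv u (val x) < dotv u (val y0).
Proof.
move=> not_comb.
have [[lam [lam_ge0 lam_supp lam1 lam_v]]|[u u_lt0]] :=
  gordan [set x | x != y0] (fun x : Y => val x - val y0).
  case: not_comb; exists lam; split=> //; split; first by rewrite lam_supp ?inE ?eqxx.
  split=> //; apply/eqP; rewrite -subr_eq0 -[X in _ - X]scale1r -lam1 scaler_suml -sumrB.
  by apply/eqP; rewrite -[RHS]lam_v; apply: eq_bigr => x _; rewrite scalerBr.
by exists u => x xy0; have := u_lt0 x; rewrite inE xy0 dotvBr subr_lt0; apply.
Qed.

Section Norm1.
Variables (R : realType) (d : nat).
Implicit Types u v : 'rV[R]_d.

Definition norm1 v : R := \sum_i `|v ord0 i|.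

Lemma norm1_ge0 v : 0 <= norm1 v.
Proof. exact: sumr_ge0. Qed.

Lemma norm1Z a v : norm1 (a *: v) = `|a| * norm1 v.
Proof. by rewrite /norm1 mulr_sumr; apply: eq_bigr => i _; rewrite mxE normrM. Qed.

Lemma norm_dotv_le u v : `|dotv u v| <= norm1 u * norm1 v.
Proof.
rewrite /dotv; apply: le_trans (ler_norm_sum _ _ _) _.
rewrite mulr_suml; apply: ler_sum => i _; rewrite normrM; apply: ler_wpM2l => //.
by rewrite /norm1 (bigD1 i) //= lerDl sumr_ge0.
Qed.

Lemma norm1_le_box v r : (forall i, `|v ord0 i| < r) -> norm1 v <= d%:R * r.
Proof.
move=> v_lt; apply: le_trans (_ : \sum_(i < d) r <= _).
  by apply: ler_sum => i _; apply/ltW/v_lt.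
by rewrite sumr_const card_ord mulr_natl.
Qed.

End Norm1.

Section MaxOn.
Variables (R : realType) (I : finType).
Implicit Types (P : pred I) (f g : I -> R).

(* Junk value [f i0] when [P i0] fails; all lemmas below assume [P i0]. *)
Definition max_on P i0 f : R := f [arg max_(i > i0 | P i) f i]%O.

Lemma max_on_ge P i0 f i : P i0 -> P i -> f i <= max_on P i0 f.
Proof. by move=> Pi0 Pi; rewrite /max_on; case: arg_maxP => // j _; apply. Qed.

Lemma max_onP P i0 f : P i0 -> exists2 i, P i & max_on P i0 f = f i.
Proof. by move=> Pi0; rewrite /max_on; case: arg_maxP => // j Pj _; exists j. Qed.

Lemma max_on_lipschitz P i0 f g e : P i0 ->
  (forall i, `|f i - g i| <= e) -> `|max_on P i0 f - max_on P i0 g| <= e.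
Proof.
move=> Pi0 fg_le; have [i Pi fi] := max_onP f Pi0; have [j Pj gj] := max_onP g Pi0.
have := max_on_ge f Pi0 Pj; have := max_on_ge g Pi0 Pi; rewrite fi gj.
move: (fg_le i) (fg_le j); rewrite !ler_norml => /andP[? ?] /andP[? ?]; lra.
Qed.

End MaxOn.

Section SplitGap.
Variables (R : realType) (I : finType) (D : I -> R) (c del : R) (lo hi : I).
Hypotheses (Dlo : D lo <= c) (Dhi : c < D hi).
Hypothesis gapD : forall x y, c < D x -> D y <= c -> del <= D x - D y.
Implicit Types g h : I -> R.

Let lo_low : [pred y | D y <= c] lo := Dlo.
Let hi_high : [pred y | c < D y] hi := Dhi.

Definition split_gap g : R :=
  max_on [pred y | D y <= c] lo g - max_on [pred y | c < D y] hi g.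

Lemma argmax_disjoint_of_split_gap g : 0 < split_gap g < del ->
  argmax_set (fun y => g y + D y) `&` argmax_set g = set0.
Proof.
rewrite /split_gap => /andP[gap_gt0 gap_lt].
apply/seteqP; split=> // y [gD_max g_max].
have [ylo Dylo g_ylo] := max_onP g lo_low.
have [yhi Dyhi g_yhi] := max_onP g hi_high.
rewrite g_ylo g_yhi in gap_gt0 gap_lt.
have [Dy|Dy] := leP (D y) c.
  have := gD_max yhi; have := gapD Dyhi Dy.
  have := max_on_ge g lo_low Dy; rewrite g_ylo; lra.
have := g_max ylo; have := max_on_ge g hi_high Dy.
rewrite g_yhi; lra.
Qed.

Lemma split_gap_lipschitz g h e :
  (forall y, `|g y - h y| <= e) -> `|split_gap g - split_gap h| <= e + e.
Proof.
move=> gh_le; rewrite /split_gap.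
have := max_on_lipschitz lo_low gh_le.
have := max_on_lipschitz hi_high gh_le.
rewrite !ler_norml => /andP[? ?] /andP[? ?]; apply/andP; split; lra.
Qed.

Lemma split_gap_ge g M :
  (forall x, x != lo -> M <= g lo - g x) -> M <= split_gap g.
Proof.
move=> lo_exposed; have [x Dx g_x] := max_onP g hi_high.
have x_neq : x != lo by apply: contraTneq Dx => ->; rewrite /= -leNgt.
have := max_on_ge g lo_low lo_low.
by rewrite /split_gap g_x; have := lo_exposed x x_neq; lra.
Qed.

Lemma split_gap_le g M :
  (forall x, x != hi -> M <= g hi - g x) -> split_gap g <= - M.
Proof.
move=> hi_exposed; have [x Dx g_x] := max_onP g lo_low.
have x_neq : x != hi by apply: contraTneq Dx => ->; rewrite /= -ltNge.
have := max_on_ge g hi_high hi_high.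
by rewrite /split_gap g_x; have := hi_exposed x x_neq; lra.
Qed.

End SplitGap.

Section Perturbation.
Variables (R : realType) (d : nat) (Y : {fset 'rV[R]_d}) (s : Y -> R) (eps : R).
Hypothesis eps_gt0 : 0 < eps.

Lemma pert_obj_lipschitz z z' y :
  `|pert_obj s eps z y - pert_obj s eps z' y| <=
    eps * norm1 (z - z') * \sum_(x : Y) norm1 (val x).
Proof.
have -> : pert_obj s eps z y - pert_obj s eps z' y = eps * dotv (z - z') (val y).
  by rewrite /pert_obj dotvBl; ring.
rewrite normrM gtr0_norm // -mulrA ler_pM2l //.
apply: le_trans (norm_dotv_le _ _) _; apply: ler_wpM2l; first exact: norm1_ge0.
by rewrite (bigD1 y) //= lerDl sumr_ge0 // => x _; exact: norm1_ge0.
Qed.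

Lemma split_gap_pert_obj_lipschitz (D : Y -> R) c lo hi z z' :
  D lo <= c -> c < D hi ->
  `|split_gap D c lo hi (pert_obj s eps z) - split_gap D c lo hi (pert_obj s eps z')| <=
    2 * eps * (\sum_(x : Y) norm1 (val x)) * norm1 (z - z').
Proof.
move=> Dlo Dhi; apply: le_trans (split_gap_lipschitz Dlo Dhi (pert_obj_lipschitz z z')) _.
lra.
Qed.

Lemma pert_obj_exposed u y0 M :
  (forall x, x != y0 -> dotv u (val x) < dotv u (val y0)) ->
  exists t, forall x, x != y0 ->
    M <= pert_obj s eps (t *: u) y0 - pert_obj s eps (t *: u) x.
Proof.
move=> u_exposes.
have [e e_gt0 le_e] : exists2 e : R, 0 < e &
    forall x, x != y0 -> e <= dotv u (val y0) - dotv u (val x).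
  by apply: exists_lb_gt0 => x xy0; rewrite subr_gt0 u_exposes.
have [B B_ge0 le_B] := exists_ub (fun x => `|s x|).
pose t := (`|M| + 2 * B) / (eps * e).
have t_ge0 : 0 <= t by rewrite divr_ge0 ?addr_ge0 ?mulr_ge0 // ltW // mulr_gt0.
have et : eps * t * e = `|M| + 2 * B by rewrite /t; field; rewrite ?gt_eqF.
exists t => x xy0; rewrite /pert_obj !dotvZl.
have : eps * t * e <= eps * t * (dotv u (val y0) - dotv u (val x)).
  by apply: ler_wpM2l; [rewrite mulr_ge0 // ltW | exact: le_e].
move: (le_B x) (le_B y0) (ler_norm M); rewrite et !ler_norml.
move=> /andP[? ?] /andP[? ?] ?; lra.
Qed.

End Perturbation.

Lemma lipschitz_continuous (R : realType) (f : R -> R) (L : R) :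
  (forall x y, `|f x - f y| <= L * `|x - y|) -> continuous f.
Proof.
move=> f_lip x; apply/cvgrPdist_le => e e_gt0.
have L1_gt0 : 0 < `|L| + 1 by rewrite ltr_wpDl.
exists (e / (`|L| + 1)); first by rewrite /= divr_gt0.
move=> y /=; rewrite ltr_pdivlMr // => xy.
apply: le_trans (f_lip x y) _; apply: le_trans (_ : `|L| * `|x - y| <= _).
  by rewrite ler_wpM2r // real_ler_norm // num_real.
by apply: ltW; apply: le_lt_trans xy; rewrite mulrC ler_wpM2l // lerDl.
Qed.

Lemma ivt_lipschitz (R : realType) (d : nat) (G : 'rV[R]_d -> R) (L : R) za zb v :
  (forall z z', `|G z - G z'| <= L * norm1 (z - z')) ->
  G zb <= v <= G za -> exists z, G z = v.
Proof.
move=> G_lip v_between; pose g t := G (za + t *: (zb - za)).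
have g_cont : continuous g.
  apply: (@lipschitz_continuous _ _ (L * norm1 (zb - za))) => t t'.
  apply: le_trans (G_lip _ _) _.
  by rewrite opprD addrACA subrr add0r -scalerBl norm1Z mulrA mulrAC.
have [|t _ gt] := @IVT _ g 0 1 v ler01 (continuous_subspaceT g_cont).
  rewrite /g scale0r addr0 scale1r addrC subrK ge_min le_max.
  by case/andP: v_between => -> ->; rewrite orbT.
by exists (za + t *: (zb - za)).
Qed.

Lemma lipschitz_box (R : realType) (d : nat) (G : 'rV[R]_d -> R) (L e : R)
    (z0 : 'rV[R]_d) :
  0 <= L -> 0 < e -> (forall z z', `|G z - G z'| <= L * norm1 (z - z')) ->
  exists2 r : R, 0 < r &
    forall z : 'rV[R]_d, (forall i, `|z ord0 i - z0 ord0 i| < r) -> `|G z - G z0| < e.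
Proof.
move=> L_ge0 e_gt0 G_lip.
have Ld1_gt0 : 0 < L * d%:R + 1 by rewrite ltr_wpDl // mulr_ge0.
exists (e / (L * d%:R + 1)) => [|z z_near]; first exact: divr_gt0.
set r := e / _ in z_near; have r_gt0 : 0 < r by exact: divr_gt0.
have r_def : r * (L * d%:R + 1) = e by rewrite divfK // gt_eqF.
apply: le_lt_trans (G_lip z z0) _.
have : L * norm1 (z - z0) <= L * (d%:R * r).
  by apply: ler_wpM2l => //; apply: norm1_le_box => i; rewrite !mxE.
lra.
Qed.

Lemma sum0_exists_lt (R : realType) (I : finType) (f : I -> R) :
  \sum_i f i = 0 -> (exists i, f i != 0) -> exists i j, f i < f j.
Proof.
move=> f_sum0 [i fi_neq0]; apply: contrapT => no_lt; move: fi_neq0.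
have f_const j : f j = f i.
  by apply/eqP; rewrite eq_le !leNgt; apply/andP; split; apply/negP => lt;
     apply: no_lt; [exists i, j | exists j, i].
move: f_sum0; under eq_bigr do rewrite f_const.
rewrite sumr_const => /eqP; rewrite mulrn_eq0 => /orP[/eqP/card0_eq/(_ i)|->//].
by rewrite inE.
Qed.

Lemma argmax_disjoint_on_box (R : realType) (d : nat) (Y : {fset 'rV[R]_d})
  (hY : forall y : Y, ~ strict_convex_comb_of_others y) (eps : R) (heps : 0 < eps)
  (s1 s2 : Y -> R) (hs1 : in_VDelta s1) (hs2 : in_VDelta s2) (hs12 : s1 <> s2) :
  exists z0 : 'rV[R]_d, exists2 r : R, 0 < r & forall z : 'rV[R]_d,
    (forall i, `|z ord0 i - z0 ord0 i| < r) ->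
    argmax_set (pert_obj s1 eps z) `&` argmax_set (pert_obj s2 eps z) = set0.
Proof.
pose D y := s1 y - s2 y.
have [lo [hi Dlo_hi]] : exists lo hi, D lo < D hi.
  apply: sum0_exists_lt; first by rewrite sumrB hs1 hs2 subrr.
  apply: contrapT => D0; apply/hs12/funext => y; apply/eqP; rewrite -subr_eq0.
  by apply: contrapT => Dy; apply: D0; exists y; apply/negP.
set c := D lo; have Dlo : D lo <= c := lexx c.
have [del del_gt0 le_del] : exists2 del : R, 0 < del &
    forall p : Y * Y, (c < D p.1) && (D p.2 <= c) -> del <= D p.1 - D p.2.
  by apply: exists_lb_gt0 => -[x y] /andP[/= Dx Dy]; rewrite subr_gt0 (le_lt_trans Dy).
have gapD x y : c < D x -> D y <= c -> del <= D x - D y.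
  by move=> Dx Dy; apply: (le_del (x, y)); rewrite /= Dx Dy.
pose G z := split_gap D c lo hi (pert_obj s2 eps z).
pose L := 2 * eps * \sum_(y : Y) norm1 (val y).
have L_ge0 : 0 <= L.
  by rewrite /L !mulr_ge0 ?(ltW heps) // sumr_ge0 // => y _; exact: norm1_ge0.
have G_lip z z' : `|G z - G z'| <= L * norm1 (z - z').
  exact: split_gap_pert_obj_lipschitz.
have [ulo ulo_exposes] := exposed_of_not_convex_comb (hY lo).
have [uhi uhi_exposes] := exposed_of_not_convex_comb (hY hi).
have [tlo tlo_gap] := pert_obj_exposed s2 heps del ulo_exposes.
have [thi thi_gap] := pert_obj_exposed s2 heps 1 uhi_exposes.
have G_lo : del <= G (tlo *: ulo) := split_gap_ge Dlo Dlo_hi tlo_gap.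
have G_hi : G (thi *: uhi) <= -1 := split_gap_le Dlo Dlo_hi thi_gap.
have [z0 G_z0] : exists z0, G z0 = del / 2.
  apply: (ivt_lipschitz (za := tlo *: ulo) (zb := thi *: uhi) G_lip).
  by apply/andP; split; lra.
have half_gt0 : 0 < del / 2 by rewrite divr_gt0.
have [r r_gt0 near_z0] := lipschitz_box z0 L_ge0 half_gt0 G_lip.
exists z0, r => // z z_near.
have -> : pert_obj s1 eps z = (fun y => pert_obj s2 eps z y + D y).
  by apply/funext => y; rewrite /pert_obj /D; ring.
apply: (argmax_disjoint_of_split_gap Dlo Dlo_hi gapD); rewrite -/(G z).
by move: (near_z0 z z_near); rewrite G_z0 ltr_norml => /andP[? ?]; apply/andP; split; lra.
Qed.

Lemma normal_prob_itv_gt0 (R : realType) (a b : R) : a < b ->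
  (0 < normal_prob 0 1 [set` `]a, b[%R])%E.
Proof.
move=> ab.
(* x ^+ 2 <= a ^+ 2 + b ^+ 2 on ]a, b[, so c bounds the density from below there. *)
set c := normal_peak (1 : R) * expR (- (a ^+ 2 + b ^+ 2) / (1 ^+ 2 *+ 2)).
have c_gt0 : 0 < c by rewrite mulr_gt0 ?expR_gt0 // normal_peak_gt0 // oner_eq0.
apply: (@lt_le_trans _ _ (\int[lebesgue_measure]_(x in [set` `]a, b[%R]) c%:E)%E).
  rewrite integral_cst /= ?lebesgue_measure_itv /= ?lte_fin ?ab;
    last exact: measurable_itv.
  by rewrite -EFinD mule_gt0 // lte_fin subr_gt0.
apply: ge0_le_integral => //.
- by move=> x _; rewrite /= lee_fin ltW.
- apply/measurable_EFinP; apply: measurable_funTS; exact: measurable_normal_pdf.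
move=> x /=; rewrite in_itv /= => /andP[ax xb].
rewrite lee_fin normal_pdfE ?oner_eq0 //= /c.
apply: ler_wpM2l; first exact: normal_peak_ge0.
rewrite /normal_fun ler_expR subr0 !mulNr lerN2; apply: ler_wpM2r.
  by rewrite invr_ge0 mulrn_wge0 // expr1n.
by rewrite !expr2; case: (lerP 0 x) => hx; nra.
Qed.

Lemma prode_gt0 (R : realType) (I : Type) (s : seq I) (P : pred I) (F : I -> \bar R) :
  (forall i, P i -> 0 < F i)%E -> (0 < \prod_(i <- s | P i) F i)%E.
Proof. by move=> F_gt0; elim/big_ind: _ => // x y; exact: mule_gt0. Qed.

Section MeasurableArgmax.
Variables (dT : measure_display) (T : measurableType dT) (R : realType).

Lemma measurable_argmax_disjoint (J : finType) (f g : J -> T -> R) :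
  (forall i, measurable_fun setT (f i)) -> (forall i, measurable_fun setT (g i)) ->
  measurable [set w | argmax_set (f^~ w) `&` argmax_set (g^~ w) = set0].
Proof.
move=> mf mg.
have m_lt (h : J -> T -> R) : (forall i, measurable_fun setT (h i)) ->
    forall x y, measurable [set w | h y w < h x w].
  move=> mh x y.
  have := measurable_fun_ltr (mh y) (mh x) measurableT (_ : measurable [set true]).
  by rewrite setTI; apply.
have -> : [set w | argmax_set (f^~ w) `&` argmax_set (g^~ w) = set0] =
    \bigcap_(y in [set: J]) (\bigcup_(x in [set: J]) [set w | f y w < f x w] `|`
                             \bigcup_(x in [set: J]) [set w | g y w < g x w]).
  apply/seteqP; split=> w /=.
    move=> disj y _; apply: contrapT => /not_orP[not_f not_g].
    have : (argmax_set (f^~ w) `&` argmax_set (g^~ w)) y.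
      split=> x; rewrite leNgt; apply/negP => lt.
        by apply: not_f; exists x.
      by apply: not_g; exists x.
    by rewrite disj.
  move=> lt_some; apply/seteqP; split=> // y [f_max g_max].
  have [[x _ lt]|[x _ lt]] := lt_some y I; [move: (f_max x) | move: (g_max x)];
    by move=> /(lt_le_trans lt); rewrite ltxx.
apply: fin_bigcap_measurable; first exact: finite_finset.
by move=> y _; apply: measurableU; apply: fin_bigcup_measurable => // x _; exact: m_lt.
Qed.

Lemma measurable_pert_obj (d : nat) (Y : {fset 'rV[R]_d}) (Z : T -> 'rV[R]_d)
  (s : Y -> R) (eps : R) (y : Y) :
  (forall i : 'I_d, measurable_fun setT (fun w => Z w ord0 i)) ->
  measurable_fun setT (fun w => pert_obj s eps (Z w) y).
Proof.
move=> mZ; apply/measurable_funD/measurable_funM => //.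
by apply: measurable_sum => i; apply: measurable_funM.
Qed.

End MeasurableArgmax.

Theorem lemma2 (R : realType) (d : nat) (Y : {fset 'rV[R]_d})
  (hY : forall y : Y, ~ strict_convex_comb_of_others y)
  (eps : R) (heps : 0 < eps)
  (dT : measure_display) (T : measurableType dT) (P : probability T R)
  (Z : T -> 'rV[R]_d) (hZ : std_normal_vector P Z)
  (s1 s2 : Y -> R) (hs1 : in_VDelta s1) (hs2 : in_VDelta s2) (hs12 : s1 <> s2) :
  (0 < P [set w | argmax_set (pert_obj s1 eps (Z w))
                  `&` argmax_set (pert_obj s2 eps (Z w)) = set0])%E.
Proof.
have [z0 [r r_gt0 box_disj]] := argmax_disjoint_on_box hY heps hs1 hs2 hs12.
case: hZ => mZ [Z_normal Z_indep].
pose B i : set R := [set` `]z0 ord0 i - r, z0 ord0 i + r[%R].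
have mB i : measurable (B i) by exact: measurable_itv.
pose box := \bigcap_(i in [set: 'I_d]) ((fun w => Z w ord0 i) @^-1` B i).
apply: (@lt_le_trans _ _ (P box)).
  rewrite Z_indep //; apply: prode_gt0 => i _.
  by rewrite Z_normal // normal_prob_itv_gt0 // ltrBlDr -addrA ltrDl addr_gt0.
apply: le_measure; rewrite ?inE.
- apply: fin_bigcap_measurable; first exact: finite_finset.
  by move=> i _; rewrite -[X in measurable X]setTI; exact: mZ.
- by apply: measurable_argmax_disjoint => y; exact: measurable_pert_obj.
move=> w box_w; apply: box_disj => i.
by have := box_w i I; rewrite /B /= in_itv /= distrC ltr_distlC.
Qed.
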